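(* In the meta-algorithm described in the context (with an arbitrary commitment subroutine), every honest search step $q$ whose current node $I^q$ is not a leaf satisfies $\Phi_{q+1}=\Phi_q-1$.
   Context: Robust dynamic pricing: there are $T$ rounds and an unknown valuation $v^\star\in[0,1)$. At each round $t$ the seller posts $p_t\in[0,1]$; the true sale indicator is $y_t=\mathbbm 1\{p_t\le v^\star\}$, the seller observes $\sigma_t\in\{0,1\}$, and round $t$ is corrupted if $\sigma_t\neq y_t$. Meta-algorithm: let $D=\lceil\log_2 T\rceil$. Consider the complete binary tree of intervals of depth $D$ with root $[0,1)$, where each non-leaf node $[L,R)$ has children $[L,M)$ and $[M,R)$, $M=(L+R)/2$; the depth-$D$ nodes are the leaves, and $\ell^\star$ is the unique leaf containing $v^\star$. The algorithm keeps a current node $I$, initially the root. If $I=[L,R)$ is not a leaf, it performs a safety check — post $L$ and observe $\sigma_L$, post $R$ and observe $\sigma_R$; the check fails if $\sigma_L=0$ or $\sigma_R=1$ (by convention the query at $L=0$ and the query at $R=1$ always count as passing). On failure $I$ becomes its parent; otherwise it posts $M$, observes $\sigma_M$, and $I$ becomes $[M,R)$ if $\sigma_M=1$ and $[L,M)$ if $\sigma_M=0$. If $I$ is a leaf, a commitment subroutine is run on $I$; it posts prices on consecutive rounds and may return FAIL, in which case $I$ becomes its parent. Search steps: each iteration at a non-leaf node (safety check plus possible midpoint query) is one search step; each call of the commitment subroutine at a leaf is one search step. A search step is honest if none of its rounds is corrupted, and corrupted otherwise. $I^q$ is the current node at the start of search step $q$, and $\Phi_q=\mathrm{dist}(I^q,\ell^\star)$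 is the length of the shortest path between $I^q$ and $\ell^\star$ in the tree. *)

From HB Require Import structures.
From mathcomp Require Import all_boot all_order all_algebra.
Set Implicit Arguments. Unset Strict Implicit. Unset Printing Implicit Defensive.
Import Order.TTheory GRing.Theory Num.Theory.

(* A node of the complete binary tree of intervals is encoded as (d, k):
   depth d, index k, standing for the dyadic interval [k/2^d, (k+1)/2^d).
   The root is (0,0); the children of (d,k) are (d+1,2k) = [L,M) and
   (d+1,2k+1) = [M,R). *)
Definition node := (nat * nat)%type.

Definition depth (T : nat) : nat := up_log 2 T.

Definition valid (D : nat) (a : node) : bool := (a.1 <= D) && (a.2 < 2 ^ a.1).

Definition is_leaf (D : nat) (a : node) : bool := a.1 == D.

Definition is_child (a b : node) : bool :=
  (b.1 == a.1.+1) && ((b.2 == a.2.*2) || (b.2 == a.2.*2.+1)).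

Definition adj (a b : node) : bool := is_child a b || is_child b a.

Inductive walk (D : nat) : node -> node -> nat -> Prop :=
| walk0 a : valid D a -> walk D a a 0
| walkS a b c n : valid D a -> adj a b -> walk D b c n -> walk D a c n.+1.

Definition is_dist (D : nat) (a b : node) (n : nat) : Prop :=
  walk D a b n /\ (forall m, walk D a b m -> n <= m).

Local Open Scope ring_scope.

Definition lo (R : realFieldType) (a : node) : R := a.2%:R / (2 ^+ a.1).
Definition hi (R : realFieldType) (a : node) : R := (a.2.+1)%:R / (2 ^+ a.1).
Definition mid (R : realFieldType) (a : node) : R := (lo R a + hi R a) / 2.

Definition contains (R : realFieldType) (a : node) (v : R) : bool :=
  (lo R a <= v) && (v < hi R a).

Definition parent (a : node) : node := (a.1.-1, a.2./2).
Definition left_child (a : node) : node := (a.1.+1, a.2.*2).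
Definition right_child (a : node) : node := (a.1.+1, a.2.*2.+1).

(* the safety check fails on observations sL (at L) and sR (at R);
   the query at L = 0 and the query at R = 1 always count as passing *)
Definition check_fails (R : realFieldType) (a : node) (sL sR : bool) : bool :=
  ((lo R a != 0) && ~~ sL) || ((hi R a != 1) && sR).

Definition search_step (R : realFieldType) (a : node) (sL sR sM : bool) : node :=
  if check_fails R a sL sR then parent a
  else if sM then right_child a else left_child a.

From HB Require Import structures.
From mathcomp Require Import all_boot all_order all_algebra zify ring.
Import Order.TTheory GRing.Theory Num.Theory.
Set Implicit Arguments. Unset Strict Implicit. Unset Printing Implicit Defensive.

(* Write the leaf containing v* as (D, L).  The distance from a node (d, k)
   to it is D - d when (d, k) is an ancestor of the leaf, i.e. when
   k = L / 2^(D-d), and otherwise one more than the distance from the parent;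
   so every other node has a neighbour one step closer: the child on the
   leaf's side for an ancestor, the parent otherwise.  Since m / 2^d <= v* iff
   m is at most the index of the depth-d ancestor, honest observations fail the
   safety check exactly at non-ancestors, and at an ancestor the midpoint query
   picks the child on the leaf's side.  So an honest step moves to that closer
   neighbour. *)

Lemma is_childE (a b : node) :
  is_child a b = (b.1 == a.1.+1) && (b.2./2 == a.2).
Proof. by rewrite /is_child; congr andb; lia. Qed.

Lemma walk_valid D a c n : walk D a c n -> valid D a.
Proof. by case. Qed.

Section LeafDistance.

Variables D L : nat.
Hypothesis L_lt : L < 2 ^ D.

Definition ancestor (d : nat) : nat := L %/ 2 ^ (D - d).

Lemma ancestor_lt d : d <= D -> ancestor d < 2 ^ d.
Proof. by move=> dD; rewrite ltn_divLR ?expn_gt0 // -expnD subnKC. Qed.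

Lemma ancestor_half d : d < D -> (ancestor d.+1)./2 = ancestor d.
Proof.
by move=> dD; rewrite -divn2 -divnMA -expnSr /ancestor subnSK.
Qed.

Lemma ancestor_root k : valid D (0, k) -> k = ancestor 0.
Proof. by case/andP=> _ /=; have := ancestor_lt (leq0n D); lia. Qed.

(* The last branch is never taken at a valid node, by [ancestor_root]. *)
Fixpoint leaf_dist_at (d k : nat) : nat :=
  if k == ancestor d then D - d
  else if d is d'.+1 then (leaf_dist_at d' k./2).+1 else 0.

Lemma leaf_dist_atE d k : leaf_dist_at d k =
  if k == ancestor d then D - d
  else if d is d'.+1 then (leaf_dist_at d' k./2).+1 else 0.
Proof. by case: d. Qed.

Definition leaf_dist (a : node) : nat := leaf_dist_at a.1 a.2.

Definition toward_leaf (a : node) : node :=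
  if a.2 == ancestor a.1 then (a.1.+1, ancestor a.1.+1) else parent a.

Lemma leaf_dist_leaf : leaf_dist (D, L) = 0.
Proof. by rewrite /leaf_dist leaf_dist_atE /ancestor subnn expn0 divn1 eqxx. Qed.

Lemma leaf_dist_child a b : valid D b -> is_child a b ->
  leaf_dist b = (leaf_dist a).+1 \/ leaf_dist a = (leaf_dist b).+1.
Proof.
case: a b => [d k] [d' k'] /andP [/= d'D _].
rewrite is_childE => /andP [/= /eqP d'E /eqP k'k]; subst d'.
rewrite /leaf_dist /= k'k; case: eqP => [k'_anc | _]; last by left.
right; rewrite leaf_dist_atE -k'k k'_anc ancestor_half // eqxx; lia.
Qed.

Lemma leaf_dist_adj a b : valid D a -> valid D b -> adj a b ->
  leaf_dist b = (leaf_dist a).+1 \/ leaf_dist a = (leaf_dist b).+1.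
Proof.
move=> va vb /orP [ab | ba]; first exact: leaf_dist_child.
by case: (leaf_dist_child va ba); [right | left].
Qed.

Lemma leaf_dist_le_walk a c m : walk D a c m -> c = (D, L) -> leaf_dist a <= m.
Proof.
elim=> [_ _ -> | a' b c' n va ab wb IH eq_c]; first by rewrite leaf_dist_leaf.
by have := leaf_dist_adj va (walk_valid wb) ab; have := IH eq_c; lia.
Qed.

Lemma toward_leafP a : valid D a -> a != (D, L) ->
  [/\ valid D (toward_leaf a), adj a (toward_leaf a)
    & leaf_dist a = (leaf_dist (toward_leaf a)).+1].
Proof.
case: a => d k /andP [/= dD k_lt] a_ne; rewrite /toward_leaf /leaf_dist /=.
case: eqP => [k_anc | k_nanc].
  have dD' : d < D.
    rewrite ltn_neqAle dD andbT; apply: contraNneq a_ne => ed.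
    by rewrite k_anc ed /ancestor subnn expn0 divn1 eqxx.
  split; rewrite /= ?eqxx.
  - by rewrite /valid /= dD' ancestor_lt.
  - by rewrite /adj is_childE /= eqxx ancestor_half // k_anc eqxx.
  - rewrite leaf_dist_atE k_anc eqxx; lia.
case: d dD k_lt a_ne k_nanc => [|d] dD k_lt _ k_nanc.
  by case: k_nanc; apply: ancestor_root; rewrite /valid /= k_lt.
split; rewrite /= ?(introF eqP k_nanc) //.
- rewrite /valid /= ltn_half_double -mul2n -expnS k_lt andbT; lia.
- by rewrite /adj orbC is_childE /= !eqxx.
Qed.

Lemma walk_to_leaf a : valid D a -> walk D a (D, L) (leaf_dist a).
Proof.
move=> va; move dist_a: (leaf_dist a) => n.
elim: n a va dist_a => [|n IH] a va dist_a.
  have a_leaf : a = (D, L).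
    apply/eqP; apply: contraT => a_ne.
    by case: (toward_leafP va a_ne) => _ _; rewrite dist_a.
  by rewrite a_leaf; apply: walk0; rewrite -a_leaf.
have a_ne : a != (D, L) by apply: contra_eq_neq dist_a => ->; rewrite leaf_dist_leaf.
case: (toward_leafP va a_ne) => vb ab; rewrite dist_a => -[dist_b].
exact: walkS va ab (IH _ vb (esym dist_b)).
Qed.

Lemma leaf_dist_is_dist a : valid D a -> is_dist D a (D, L) (leaf_dist a).
Proof.
by move=> va; split=> [|m w]; [exact: walk_to_leaf | exact: leaf_dist_le_walk w _].
Qed.

End LeafDistance.

Local Open Scope ring_scope.

Lemma dyadic_neq0 (R : realFieldType) d k : (k%:R / 2 ^+ d != 0 :> R) = (k != 0)%N.
Proof.
have d_neq0 : (2 ^+ d : R) != 0 by rewrite gt_eqF // exprn_gt0.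
by rewrite mulf_eq0 invr_eq0 (negbTE d_neq0) orbF pnatr_eq0.
Qed.

Lemma dyadic_neq1 (R : realFieldType) d k :
  (k%:R / 2 ^+ d != 1 :> R) = (k != 2 ^ d)%N.
Proof.
have d_neq0 : (2 ^+ d : R) != 0 by rewrite gt_eqF // exprn_gt0.
rewrite -(eqr_nat R) natrX; congr negb.
by apply/eqP/eqP => [/divr1_eq | ->]; last exact: divff.
Qed.

Lemma dyadic_rescale (R : realFieldType) D d m : (d <= D)%N ->
  m%:R / 2 ^+ d = (m * 2 ^ (D - d))%:R / 2 ^+ D :> R.
Proof.
move=> dD; rewrite natrM natrX -{2}(subnKC dD) exprD.
have d_neq0 : (2 ^+ d : R) != 0 by rewrite gt_eqF // exprn_gt0.
have Dd_neq0 : (2 ^+ (D - d) : R) != 0 by rewrite gt_eqF // exprn_gt0.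
by field; rewrite d_neq0 Dd_neq0.
Qed.

Lemma midE (R : realFieldType) d k : mid R (d, k) = k.*2.+1%:R / 2 ^+ d.+1.
Proof.
have d_neq0 : (2 ^+ d : R) != 0 by rewrite gt_eqF // exprn_gt0.
rewrite /mid /lo /hi /= -muln2 !mulrSr natrM exprS.
by field; rewrite add0r.
Qed.

Section HonestStep.

Variables (R : realFieldType) (D L : nat) (v : R).
Hypotheses (L_lt : (L < 2 ^ D)%N) (v_in_leaf : contains (D, L) v).

Lemma dyadic_le_leaf N : (N%:R / 2 ^+ D <= v) = (N <= L)%N.
Proof.
case/andP: v_in_leaf; rewrite /lo /hi /= => lo_v v_hi.
have D_gt0 : 0 < (2 ^+ D : R)^-1 by rewrite invr_gt0 exprn_gt0.
case: leqP => [NL | LN].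
  by apply: le_trans lo_v; rewrite ler_pM2r // ler_nat.
by apply: lt_geF; apply: lt_le_trans v_hi _; rewrite ler_pM2r // ler_nat.
Qed.

Lemma dyadic_le_ancestor d m : (d <= D)%N ->
  (m%:R / 2 ^+ d <= v) = (m <= ancestor D L d)%N.
Proof.
move=> dD; rewrite (dyadic_rescale _ _ dD) dyadic_le_leaf leq_divRL //.
by rewrite expn_gt0.
Qed.

Lemma honest_check_fails a : valid D a ->
  check_fails R a (lo R a <= v) (hi R a <= v) = (a.2 != ancestor D L a.1).
Proof.
case: a => d k /andP [/= dD k_lt].
rewrite /check_fails /lo /hi /= dyadic_neq0 dyadic_neq1 !dyadic_le_ancestor //.
by have := ancestor_lt L_lt dD; lia.
Qed.

Lemma honest_search_step a sM : valid D a -> ~~ is_leaf D a ->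
  (~~ check_fails R a (lo R a <= v) (hi R a <= v) -> sM = (mid R a <= v)) ->
  search_step R a (lo R a <= v) (hi R a <= v) sM = toward_leaf D L a.
Proof.
move=> va a_nleaf honM; rewrite /search_step /toward_leaf honest_check_fails //.
case: eqP => [a_anc | //] /=.
rewrite honM ?honest_check_fails ?a_anc ?eqxx //.
case: a va a_nleaf a_anc {honM} => d k /andP [/= dD _] dD' /= k_anc.
have dD1 : (d < D)%N by rewrite ltn_neqAle dD' dD.
rewrite midE dyadic_le_ancestor // /right_child /left_child /=.
have := ancestor_half L dD1.
by case: ifP => mid_le half_anc; congr pair; lia.
Qed.

End HonestStep.

Theorem lemma3p1 (R : realFieldType) (T : nat) (vstar : R)
  (hv0 : 0 <= vstar) (hv1 : vstar < 1)
  (lstar : node) (Hl : valid (depth T) lstar) (Hleaf : is_leaf (depth T) lstar)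
  (Hcont : contains lstar vstar)
  (I : node) (HI : valid (depth T) I) (HnI : ~~ is_leaf (depth T) I)
  (sL sR sM : bool)
  (honL : sL = (lo R I <= vstar))
  (honR : sR = (hi R I <= vstar))
  (honM : ~~ check_fails R I sL sR -> sM = (mid R I <= vstar)) :
  exists n : nat,
    is_dist (depth T) I lstar n.+1 /\
    is_dist (depth T) (search_step R I sL sR sM) lstar n.
Proof.
move: (depth T) Hl Hleaf HI HnI => D Hl Hleaf HI HnI.
case: lstar Hl Hleaf Hcont => D' L /andP [_ /= L_lt] /eqP /= eD; subst D' => Hcont.
have I_ne : I != (D, L) by apply: contraNneq HnI => ->; rewrite /is_leaf eqxx.
have [v_next _ dist_I] := toward_leafP L_lt HI I_ne.
subst sL sR; rewrite (honest_search_step L_lt Hcont HI HnI honM).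
exists (leaf_dist D L (toward_leaf D L I)); rewrite -dist_I.
by split; apply: leaf_dist_is_dist.
Qed.
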